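(* Let $\Phi=\forall u_1\ldots\forall u_n\exists e_1(D_1)\ldots\exists e_m(D_m).\varphi$ be a DQBF. If Algorithm 1 (as described in the context), run on $\Phi$, returns TRUE, then $\Phi$ is true; this holds for every admissible choice of the witnesses, definitions, satisfying assignments and cores made during the run.
   Context: For a set $V$ of variables, $[V]$ is the set of assignments $V\to\{\textsc{true},\textsc{false}\}$; assignments are identified with terms of the literals they make true, $\neg\sigma$ is the clause of the negations of these literals, and $\sigma|_W$ denotes restriction. A DQBF is $\Phi=\forall u_1\ldots\forall u_n\exists e_1(D_1)\ldots\exists e_m(D_m).\varphi$ with pairwise distinct variables, $U=\{u_i\}$, $E=\{e_j\}$, dependency sets $D(e_j)=D_j\subseteq U$, $\varphi$ a CNF over $U\cup E$; a model is a family $(f_e)_{e\in E}$, $f_e:[D(e)]\to\{\textsc{true},\textsc{false}\}$, such that for all $\sigma\in[U]$ the assignment $\sigma$ together with $e\mapsto f_e(\sigma|_{D(e)})$ satisfies $\varphi$; $\Phi$ is true iff it has a model. A definition of a variable $x$ by a set $X$ in a formula $\chi$ is a formula $\psi$ with $\mathit{var}(\psi)\subseteq X$ such that every satisfying assignment $\lambda$ of $\chi$ has $\lambda(x)=\psi[\lambda]$. Arbiter variables $e^\sigma$ ($e\in E$, $\sigma\in[D(e)]$) are fresh variables. Algorithm 1. Phase 1: set $A=\emptyset$, $\varphi_A=\emptyset$ (empty CNF), $\psi_{\mathit{Def}}=$ empty conjunction. For $i=1,\dots,m$: while $e_i$ has no definition by $A\cup D_i$ in $\varphi\wedge\varphi_A$,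 choose an assignment $\xi\in[D_i\cup A]$ such that both $\varphi\wedge\varphi_A\wedge\xi\wedge e_i$ and $\varphi\wedge\varphi_A\wedge\xi\wedge\neg e_i$ are satisfiable, let $\sigma=\xi|_{D_i}$, add the new variable $e_i^\sigma$ to $A$ and add the clauses $(e_i^\sigma\vee\neg\sigma\vee\neg e_i)$ and $(\neg e_i^\sigma\vee\neg\sigma\vee e_i)$ to $\varphi_A$. When $e_i$ has a definition by $A\cup D_i$ in $\varphi\wedge\varphi_A$, choose such a definition $\psi^i$ and conjoin $(e_i\leftrightarrow\psi^i)$ to $\psi_{\mathit{Def}}$. Phase 2: let $\tau\in[A]$ set all arbiter variables to true and let $\mathcal{C}=\emptyset$ (a set of clauses over $A$). Repeat: if $\neg\varphi\wedge\psi_{\mathit{Def}}\wedge\tau$ is unsatisfiable, return TRUE. Otherwise choose a satisfying assignment $\sigma$ of it, choose a subset $\rho$ of the literals of $\tau\wedge\sigma|_U$ such that $\varphi\wedge\varphi_A\wedge\rho$ is unsatisfiable, add the clause $\neg(\rho|_A)$ to $\mathcal{C}$; if $\mathcal{C}$ is satisfiable, let $\tau\in[A]$ be a satisfying assignment of $\mathcal{C}$ (extended arbitrarily to all of $A$) and repeat; otherwise return FALSE. *)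

From HB Require Import structures.
From mathcomp Require Import all_boot.
Set Implicit Arguments. Unset Strict Implicit. Unset Printing Implicit Defensive.

(* Universal variables u_i are indexed by 'I_n, existential variables e_j by 'I_m,
   D : 'I_m -> {set 'I_n} gives the dependency sets, and the matrix phi is a CNF
   over literals of U + E (inl u = universal u, inr j = existential e_j). *)

Section Vars.
Variables n m : nat.

(* All variables used by Algorithm 1: universal, existential, and arbiter
   variables e_j^sigma.  The assignment sigma in [D_j] is represented by the
   canonical key [ffun u => (u \in D_j) && sigma u] (injective on [D_j]). *)
Inductive var :=
| VU of 'I_n
| VE of 'I_m
| VA of 'I_m & {ffun 'I_n -> bool}.

Definition var_enc (x : var) : ('I_n + 'I_m) + ('I_m * {ffun 'I_n -> bool}) :=
  match x with VU u => inl (inl u) | VE j => inl (inr j) | VA j s => inr (j, s) end.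
Definition var_dec (y : ('I_n + 'I_m) + ('I_m * {ffun 'I_n -> bool})) : var :=
  match y with inl (inl u) => VU u | inl (inr j) => VE j | inr (j, s) => VA j s end.
Lemma var_encK : cancel var_enc var_dec. Proof. by case. Qed.
HB.instance Definition _ := Finite.copy var (can_type var_encK).

Definition emb (x : 'I_n + 'I_m) : var :=
  match x with inl u => VU u | inr j => VE j end.
End Vars.

(** Literals, clauses, CNFs, assignments (total functions; only the values on
    the relevant variables matter). *)
Definition lit (V : Type) := (V * bool)%type.
Definition sat_lit V (l : V -> bool) (x : lit V) : bool := l x.1 == x.2.
Definition sat_clause V (l : V -> bool) (c : seq (lit V)) : bool := has (sat_lit l) c.
Definition sat_cnf V (l : V -> bool) (F : seq (seq (lit V))) : bool :=
  all (sat_clause l) F.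

Inductive form (V : Type) :=
| FTrue | FFalse | FVar of V | FNot of form V
| FAnd of form V & form V | FOr of form V & form V.
Arguments FTrue {V}. Arguments FFalse {V}.

Fixpoint eval V (l : V -> bool) (f : form V) : bool :=
  match f with
  | FTrue => true | FFalse => false | FVar x => l x
  | FNot g => ~~ eval l g
  | FAnd g h => eval l g && eval l h
  | FOr g h => eval l g || eval l h
  end.

Fixpoint fvars V (f : form V) : seq V :=
  match f with
  | FTrue | FFalse => [::] | FVar x => [:: x]
  | FNot g => fvars g
  | FAnd g h | FOr g h => fvars g ++ fvars h
  end.

Section DQBF.
Variables n m : nat.
Variable D : 'I_m -> {set 'I_n}.
Variable phi : seq (seq (lit ('I_n + 'I_m))).

Local Notation var := (var n m).

(** An element of [D(e_j)] is represented by its restriction key (see above);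
    f j is applied to the restriction of sigma to D j. *)
Definition restr (W : {set 'I_n}) (s : 'I_n -> bool) : {ffun 'I_n -> bool} :=
  [ffun u => (u \in W) && s u].

Definition dqbf_true : Prop :=
  exists f : 'I_m -> {ffun 'I_n -> bool} -> bool,
    forall s : {ffun 'I_n -> bool},
      sat_cnf (fun x => match x with
                        | inl u => s u
                        | inr j => f j (restr (D j) s) end) phi.

Definition sat_phi (l : var -> bool) : bool := sat_cnf (l \o @emb n m) phi.

Definition agree (l l' : var -> bool) (X : {set var}) : Prop :=
  forall x, x \in X -> l x = l' x.

Definition is_definition (FA : seq (seq (lit var))) (x : var) (X : {set var})
    (psi : form var) : Prop :=
  (forall y, y \in fvars psi -> y \in X) /\
  (forall l : var -> bool, sat_phi l -> sat_cnf l FA -> l x = eval l psi).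

Definition depvars (j : 'I_m) (A : {set var}) : {set var} :=
  A :|: [set VU m u | u in D j].

(* the clause  ~sigma  for sigma = xi|_{D_j} *)
Definition neg_term (j : 'I_m) (xi : var -> bool) : seq (lit var) :=
  [seq (VU m u, ~~ xi (VU m u)) | u <- enum (D j)].

Definition arb_key (j : 'I_m) (xi : var -> bool) : {ffun 'I_n -> bool} :=
  restr (D j) (fun u => xi (VU m u)).

(** Phase 1: reachable states (k, A, phi_A, [psi^1; ...; psi^k]) where k is the
    number of existential variables already given a definition. *)
Inductive phase1 : nat -> {set var} -> seq (seq (lit var)) -> seq (form var) -> Prop :=
| P1_start : phase1 0 set0 [::] [::]
| P1_arbiter k (Hk : k < m) A FA ps (xi : var -> bool) :
    phase1 k A FA ps ->
    ~ (exists psi, is_definition FA (VE n (Ordinal Hk)) (depvars (Ordinal Hk) A) psi) ->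
    (forall b : bool, exists l : var -> bool,
        [/\ sat_phi l, sat_cnf l FA, agree l xi (depvars (Ordinal Hk) A)
          & l (VE n (Ordinal Hk)) = b]) ->
    let j := Ordinal Hk in
    let a := VA j (arb_key j xi) in
    phase1 k (a |: A)
      (((a, true) :: (VE n j, false) :: neg_term j xi) ::
       ((a, false) :: (VE n j, true) :: neg_term j xi) :: FA) ps
| P1_define k (Hk : k < m) A FA ps (psi : form var) :
    phase1 k A FA ps ->
    is_definition FA (VE n (Ordinal Hk)) (depvars (Ordinal Hk) A) psi ->
    phase1 k.+1 A FA (rcons ps psi).

Section Phase2.
Variables (A : {set var}) (FA : seq (seq (lit var))) (ps : seq (form var)).

Definition def_sat (l : var -> bool) : Prop :=
  forall i : 'I_m, l (VE n i) = eval l (nth FFalse ps i).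

Definition cex (tau l : var -> bool) : Prop :=
  ~~ sat_phi l /\ def_sat l /\ agree l tau A.

Inductive phase2 : (var -> bool) -> seq (seq (lit var)) -> Prop :=
| P2_start : phase2 (fun _ => true) [::]
| P2_step tau C (sigma : var -> bool) (rho : seq (lit var)) (tau' : var -> bool) :
    phase2 tau C ->
    cex tau sigma ->
    (forall x, x \in rho ->
        (x.1 \in A /\ x.2 = tau x.1) \/ (exists u, x.1 = VU m u /\ x.2 = sigma (VU m u))) ->
    (forall l : var -> bool, ~ [&& sat_phi l, sat_cnf l FA & all (sat_lit l) rho]) ->
    let c := [seq (x.1, ~~ x.2) | x <- rho & x.1 \in A] in
    sat_cnf tau' (c :: C) ->
    phase2 tau' (c :: C).

(* the run returns TRUE at state (tau, C) *)
Definition returns_true (tau : var -> bool) : Prop :=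
  ~ exists l : var -> bool, cex tau l.
End Phase2.
End DQBF.

From mathcomp Require Import all_boot.
Set Implicit Arguments. Unset Strict Implicit. Unset Printing Implicit Defensive.

(* Phase 1 only ever defines e_i by formulas over the universals of D_i and
   arbiter variables.  Fix the arbiters to the final tau of Phase 2: each
   definition psi^i becomes a function of D_i alone, i.e. a Skolem function
   for e_i.  If these Skolem functions failed on some universal assignment,
   extending it by them would satisfy ~phi /\ psi_Def /\ tau, contradicting
   the fact that Phase 2 returned TRUE. *)

Lemma eq_eval (V : eqType) (l l' : V -> bool) (f : form V) :
  {in fvars f, l =1 l'} -> eval l f = eval l' f.
Proof.
elim: f => //= [x | g IHg | g IHg h IHh | g IHg h IHh] ll'.
- by apply: ll'; rewrite inE.
- by rewrite IHg.
- by rewrite IHg ?IHh // => y y_h; apply: ll'; rewrite mem_cat y_h ?orbT.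
- by rewrite IHg ?IHh // => y y_h; apply: ll'; rewrite mem_cat y_h ?orbT.
Qed.

Lemma eq_sat_cnf V (l l' : V -> bool) F : l =1 l' -> sat_cnf l F = sat_cnf l' F.
Proof.
move=> ll'; apply: eq_all => c; apply: eq_has => x.
by rewrite /sat_lit ll'.
Qed.

Section Soundness.
Variables (n m : nat) (D : 'I_m -> {set 'I_n}).
Variable phi : seq (seq (lit ('I_n + 'I_m))).

Local Notation var := (var n m).

Definition is_arbiter (y : var) : bool := if y is VA _ _ then true else false.

Definition admissible_var (i : 'I_m) (y : var) : bool :=
  match y with VU u => u \in D i | VE _ => false | VA _ _ => true end.

Definition admissible_defs (ps : seq (form var)) : Prop :=
  forall (i : 'I_m) y, y \in fvars (nth FFalse ps i) -> admissible_var i y.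

Lemma phase1_size k A FA ps : phase1 D phi k A FA ps -> size ps = k.
Proof.
by elim=> {k A FA ps} // k Hk A' FA' ps' psi _ ps'_size _; rewrite size_rcons ps'_size.
Qed.

Lemma phase1_arbiters k A FA ps :
  phase1 D phi k A FA ps -> forall y, y \in A -> is_arbiter y.
Proof.
elim=> {k A FA ps} [y | k Hk A' FA' ps' xi _ A'_arb _ _ j a y | //].
  by rewrite in_set0.
by rewrite in_setU1 => /orP [/eqP -> //| /A'_arb].
Qed.

Lemma phase1_admissible k A FA ps :
  phase1 D phi k A FA ps -> admissible_defs ps.
Proof.
elim=> {k A FA ps} [i y | // | k Hk A' FA' ps' psi ph1 ps'_adm [psi_vars _] i y].
  by rewrite nth_nil.
rewrite nth_rcons (phase1_size ph1).
case: ltnP => [_ | _]; first exact: ps'_adm.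
case: eqP => // i_k.
have -> : i = Ordinal Hk by exact: val_inj.
move=> /psi_vars; rewrite inE => /orP [/(phase1_arbiters ph1) | ].
  by case: y.
by case/imsetP => u u_D ->.
Qed.

Section SkolemExtension.
Variables (ps : seq (form var)) (tau : var -> bool).
Hypothesis ps_adm : admissible_defs ps.

(* The value given to existential variables here is a placeholder: the
   definitions never read it. *)
Definition arbiter_lift (s : 'I_n -> bool) (y : var) : bool :=
  match y with VU u => s u | VE _ => false | VA _ _ => tau y end.

Definition skolem_fun (i : 'I_m) (s : 'I_n -> bool) : bool :=
  eval (arbiter_lift s) (nth FFalse ps i).

Definition skolem_ext (s : 'I_n -> bool) (y : var) : bool :=
  if y is VE i then skolem_fun i s else arbiter_lift s y.

Lemma skolem_fun_restr i s : skolem_fun i (restr (D i) s) = skolem_fun i s.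
Proof.
apply: eq_eval => y /ps_adm; case: y => //= u u_D.
by rewrite ffunE u_D.
Qed.

Lemma def_sat_skolem_ext s : def_sat ps (skolem_ext s).
Proof. by move=> i /=; apply: eq_eval => y /ps_adm; case: y. Qed.

Lemma returns_true_sat_phi (A : {set var}) s :
  (forall y, y \in A -> is_arbiter y) ->
  returns_true phi A ps tau -> sat_phi phi (skolem_ext s).
Proof.
move=> A_arb no_cex; apply/idPn => unsat; apply: no_cex; exists (skolem_ext s).
split; [exact: unsat | split; first exact: def_sat_skolem_ext].
by move=> y /A_arb; case: y.
Qed.

Lemma dqbf_true_of_returns_true (A : {set var}) :
  (forall y, y \in A -> is_arbiter y) ->
  returns_true phi A ps tau -> dqbf_true D phi.
Proof.
move=> A_arb no_cex; exists skolem_fun => s.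
rewrite (eq_sat_cnf _ (l' := skolem_ext s \o @emb n m)).
  exact: returns_true_sat_phi A_arb no_cex.
by case=> //= j; rewrite skolem_fun_restr.
Qed.

End SkolemExtension.
End Soundness.

Theorem theorem1 (n m : nat) (D : 'I_m -> {set 'I_n})
    (phi : seq (seq (lit ('I_n + 'I_m))))
    (A : {set var n m}) (FA : seq (seq (lit (var n m)))) (ps : seq (form (var n m)))
    (tau : var n m -> bool) (C : seq (seq (lit (var n m)))) :
  phase1 D phi m A FA ps ->
  phase2 phi A FA ps tau C ->
  returns_true phi A ps tau ->
  dqbf_true D phi.
Proof.
move=> ph1 _ no_cex.
exact: (dqbf_true_of_returns_true (phase1_admissible ph1)
         (phase1_arbiters ph1) no_cex).
Qed.
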